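(* Let $u$ be a nonzero Laurent polynomial with symmetry type $\mathrm{S}u(z)=\epsilon z^c$, $\epsilon\in\{\pm1\}$, $c\in\mathbb Z$. Then $\epsilon=(-1)^{Z(u,1)}$ and $\mathrm{odd}(c)=\mathrm{odd}(Z(u,1)+Z(u,-1))$.
   Context: Laurent polynomial: $u(z)=\sum_k u(k)z^k$ with finitely many nonzero complex coefficients. $u$ has symmetry type $\epsilon z^c$ if $u(z)=\epsilon z^cu(z^{-1})$, and then $\mathrm{S}u(z):=u(z)/u(z^{-1})=\epsilon z^c$. $Z(u,z_0)$ is the multiplicity of $z_0\neq0$ as a zero of $u$. $\mathrm{odd}(k):=(1-(-1)^k)/2$. *)

From HB Require Import structures.
From mathcomp Require Import all_boot all_order all_algebra.
From mathcomp Require Import complex.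
From mathcomp Require Import reals.
Set Implicit Arguments. Unset Strict Implicit. Unset Printing Implicit Defensive.
Import Order.TTheory GRing.Theory Num.Theory.
Local Open Scope ring_scope.

(* Laurent polynomial with complex coefficients: coefficient function on int
   vanishing outside [-lbound, lbound]. *)
Record lpoly (C : nzRingType) := LPoly {
  lcoef :> int -> C;
  lbound : nat;
  lboundP : forall k : int, (lbound < `|k|)%N -> lcoef k = 0 }.

Section Laurent.
Variable C : fieldType.
Implicit Types (u : lpoly C) (z : C).

(* u(z) = \sum_k u(k) z^k *)
Definition leval u z : C :=
  \sum_(i < (lbound u).*2.+1) u (i%:Z - (lbound u)%:Z) * z ^ (i%:Z - (lbound u)%:Z).

(* the polynomial z^N u(z) *)
Definition lshiftpoly u : {poly C} :=
  \poly_(i < (lbound u).*2.+1) u (i%:Z - (lbound u)%:Z).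

(* Z(u, z0): multiplicity of z0 as a zero of u (meaningful for z0 != 0) *)
Definition lmult u z0 : nat := mup z0 (lshiftpoly u).

Definition lpoly_nonzero u : Prop := exists k, u k != 0.

Definition has_symtype u (eps : C) (c : int) : Prop :=
  forall z, z != 0 -> leval u z = eps * z ^ c * leval u z^-1.
End Laurent.

Definition oddZ (k : int) : nat := odd `|k|%N.

From HB Require Import structures.
From mathcomp Require Import all_boot all_order all_algebra.
From mathcomp Require Import complex.
From mathcomp Require Import reals.
From mathcomp Require Import zify ring.
Import Order.TTheory GRing.Theory Num.Theory.
Local Open Scope ring_scope.
Local Open Scope complex_scope.

(* Write P(z) = z^N u(z) with N the bound of u: the symmetry becomes
   P(z) = eps z^m P(1/z) with m = c + 2N.  Split P = r (z+1)^b (z-1)^a with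
   r(1), r(-1) nonzero.  As 1/z - 1 = -(z-1)/z and 1/z + 1 = (z+1)/z, the
   cofactor r satisfies r(z) = eps (-1)^a z^(m-a-b) r(1/z) for z <> 0, 1, -1;
   after clearing powers of z this is a polynomial identity, so it holds at
   z = 1 and z = -1 as well, where it yields eps (-1)^a = 1 and
   (-1)^(m-a-b) = 1. *)

Set Implicit Arguments. Unset Strict Implicit. Unset Printing Implicit Defensive.

Section PolySymtype.
Variable F : fieldType.
Implicit Types (p r : {poly F}) (S : seq F) (e x z : F) (m : int).

Definition symtype_off S p e m :=
  forall z, z \notin S -> p.[z] = e * z ^ m * p.[z^-1].

Definition reciprocal p : {poly F} := \poly_(i < size p) p`_((size p).-1 - i).

Lemma horner_reciprocal p z : z != 0 ->
  (reciprocal p).[z] = z ^+ (size p).-1 * p.[z^-1].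
Proof.
move=> z0; rewrite horner_poly horner_coef mulr_sumr.
rewrite (reindex_inj rev_ord_inj) /=; apply: eq_bigr => i _.
have le_i : (i <= (size p).-1)%N by rewrite -ltnS (ltn_predK (ltn_ord i)).
rewrite subnS predn_sub subKn // exprVn mulrCA; congr (_ * _).
by rewrite -{2}(subnK le_i) exprD mulfK // expf_neq0.
Qed.

Lemma symtype_reciprocalE p e m (K j : nat) z :
  K%:Z + m = j%:Z + (size p).-1%:Z -> z != 0 ->
  (('X^K * p).[z] == (e *: ('X^j * reciprocal p)).[z]) =
  (p.[z] == e * z ^ m * p.[z^-1]).
Proof.
move=> Kj z0; rewrite hornerZ !hornerM !hornerXn horner_reciprocal //.
rewrite [z ^+ j * _]mulrA -exprD (exprnP z (j + _)) PoszD -Kj expfzDr // -exprnP.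
rewrite -[z ^+ K * z ^ m * _]mulrA (mulrCA e (z ^+ K)).
by rewrite (inj_eq (mulfI (expf_neq0 K z0))) mulrA.
Qed.

Lemma symtype_off_divXsubC S r x n e m : x * x = 1 ->
  symtype_off S (r * ('X - x%:P) ^+ n) e m ->
  symtype_off [:: 0, x & S] r (e * (- x) ^+ n) (m - n%:Z).
Proof.
move=> xx sym z; rewrite !inE !negb_or => /and3P[z0 zx zS].
have zx0 : (z - x) ^+ n != 0 by rewrite expf_neq0 // subr_eq0.
have invXsubC : z^-1 - x = - x * z^-1 * (z - x).
  by rewrite mulrBr -mulrA mulVf // mulr1 !mulNr opprK mulrAC xx mul1r addrC.
apply: (mulIf zx0); move: (sym z zS).
rewrite !hornerM !horner_exp !hornerXsubC => ->; rewrite invXsubC !exprMn.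
by rewrite expfzDr // -exprnN exprVn; ring.
Qed.

End PolySymtype.

Section PolySymtypeNum.
Variable F : numFieldType.
Implicit Types (p q : {poly F}) (S : seq F) (e : F) (m : int).

Lemma eq_poly_off S p q : (forall z, z \notin S -> p.[z] = q.[z]) -> p = q.
Proof.
move=> eq_pq; apply/eqP; rewrite -subr_eq0; apply/eqP.
set pts := [seq i%:R : F | i <- iota 0 (size S + size (p - q))].
have uniq_pts : uniq pts.
  by rewrite map_inj_uniq ?iota_uniq // => i j /eqP; rewrite eqr_nat => /eqP.
apply: (@roots_geq_poly_eq0 _ _ (filter (predC (mem S)) pts)).
- apply/allP => z; rewrite mem_filter => /andP[/= zS _].
  by rewrite rootE hornerD hornerN eq_pq // subrr.
- exact: filter_uniq.
- rewrite size_filter -(leq_add2l (count (mem S) pts)) count_predC.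
  rewrite size_map size_iota leq_add2r -size_filter.
  by apply: uniq_leq_size => [|z]; rewrite ?filter_uniq // mem_filter => /andP[].
Qed.

Lemma symtype_off_extend S p e m :
  symtype_off S p e m -> symtype_off [:: 0] p e m.
Proof.
move=> sym z; rewrite inE => z0.
(* Both sides are polynomials agreeing off [0 :: S], hence equal. *)
have [K [j Kj]] : exists K j : nat, K%:Z + m = j%:Z + (size p).-1%:Z.
  by exists (`|m| + (size p).-1)%N, (absz (`|m|%:Z + m)); lia.
have E : 'X^K * p = e *: ('X^j * reciprocal p).
  apply: (@eq_poly_off (0 :: S)) => w; rewrite inE negb_or => /andP[w0 wS].
  by apply/eqP; rewrite (symtype_reciprocalE _ Kj w0); apply/eqP/sym.
by apply/eqP; rewrite -(symtype_reciprocalE _ Kj z0) E.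
Qed.

Lemma expN1z_eq1 (k : int) : (-1 : F) ^ k = 1 -> ~~ odd `|k|%N.
Proof. by rewrite expN1r -signr_odd => /(@signr_inj _ _ false) ->. Qed.

Lemma symtype_mup (P : {poly F}) e m : P != 0 -> symtype_off [:: 0] P e m ->
  e = (-1) ^+ mup 1 P /\ oddZ m = odd (mup 1 P + mup (-1) P).
Proof.
move=> P0 sym.
have N11 : (-1 : F) != 1 by rewrite lt_eqF // (lt_trans (ltrN10 F) ltr01).
have [a [q]] := multiplicity_XsubC P 1; rewrite P0 /= => q1 Pq.
have q0 : q != 0 by apply: contraNneq P0 => q0; rewrite Pq q0 mul0r.
have [b [r]] := multiplicity_XsubC q (-1); rewrite q0 /= => rN1 qr.
have r1 : ~~ root r 1 by apply: contra q1; rewrite qr rootM => ->.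
have mup1 : mup 1 P = a by rewrite Pq mupMr // mup_XsubCX eqxx.
have mupN1 : mup (-1) P = b.
  have N1_root : ~~ root (('X - (1 : F)%:P) ^+ a) (-1).
    by rewrite /root horner_exp hornerXsubC expf_eq0 subr_eq0 (negPf N11) andbF.
  by rewrite Pq mupMl // qr mupMr // mup_XsubCX eqxx.
rewrite Pq qr in sym.
have N1N1 : (-1 : F) * -1 = 1 by rewrite mulrNN mulr1.
have := symtype_off_divXsubC N1N1 (symtype_off_divXsubC (mulr1 1) sym).
move=> /symtype_off_extend; rewrite opprK expr1n mulr1 mup1 mupN1 => symr.
have f1 : e * (-1) ^+ a = 1.
  have := symr 1; rewrite inE oner_eq0 invr1 exp1rz mulr1 => /(_ isT).
  by rewrite -{1}[r.[1]]mul1r => /(mulIf r1)/esym.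
split.
  have := congr1 ( *%R^~ ((-1) ^+ a)) f1.
  by rewrite /= -mulrA -expr2 sqrr_sign mulr1 mul1r.
have := symr (-1); rewrite inE oppr_eq0 oner_eq0 invrN1 f1 mul1r => /(_ isT).
rewrite -{1}[r.[-1]]mul1r => /(mulIf rN1)/esym/expN1z_eq1/negPf.
rewrite /oddZ; lia.
Qed.

End PolySymtypeNum.

Section LaurentShift.
Variable C : fieldType.
Implicit Types (u : lpoly C) (z : C).

Lemma leval_lshiftpoly u z : z != 0 ->
  leval u z = (lshiftpoly u).[z] * z ^ (- (lbound u)%:Z).
Proof.
move=> z0; rewrite /leval horner_poly mulr_suml; apply: eq_bigr => i _.
by rewrite -mulrA expfzDr.
Qed.

Lemma lshiftpoly_neq0 u : lpoly_nonzero u -> lshiftpoly u != 0.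
Proof.
case=> k uk; have kN : (`|k| <= lbound u)%N.
  by rewrite leqNgt; apply: contra uk => /lboundP ->.
apply: contraNneq uk => u0.
have := congr1 (fun p : {poly C} => p`_`|k + (lbound u)%:Z|) u0.
rewrite coef0 coef_poly ifT; last by lia.
have -> : (absz (k + (lbound u)%:Z))%:Z - (lbound u)%:Z = k by lia.
by move=> ->.
Qed.

Lemma has_symtype_lshiftpoly u eps c : has_symtype u eps c ->
  symtype_off [:: 0] (lshiftpoly u) eps (c + (lbound u)%:Z + (lbound u)%:Z).
Proof.
move=> sym z; rewrite inE => z0; have := sym z z0.
rewrite !leval_lshiftpoly ?invr_eq0 // exprz_inv opprK !expfzDr // -invr_expz.
have zN : z ^ (lbound u)%:Z != 0 by rewrite expfz_neq0.
by move=> E; apply: (mulIf (invr_neq0 zN)); rewrite E; field.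
Qed.

End LaurentShift.

Theorem lemma3p2 (R : realType) (u : lpoly R[i]) (eps : R[i]) (c : int) :
  lpoly_nonzero u ->
  (eps = 1 \/ eps = -1) ->
  has_symtype u eps c ->
  eps = (-1) ^+ lmult u 1 /\
  oddZ c = oddZ ((lmult u 1 + lmult u (-1))%N)%:Z.
Proof.
move=> nz_u _ sym.
have [-> parity] := symtype_mup (lshiftpoly_neq0 nz_u) (has_symtype_lshiftpoly sym).
split=> //; move: parity; rewrite /oddZ /lmult.
by move: (mup _ _) (mup _ _) (lbound u) => a b n; lia.
Qed.
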